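(* Let $n\ge1$ and let $\pi$ be uniformly distributed on $\mathcal S_n$. Then there exists a random permutation $\sigma\in\mathcal S_n$, which is a (bijective) deterministic function of $\pi$ and hence uniformly distributed on $\mathcal S_n$, such that with the one-cycle permutation $\sigma^*:=(\pi(1),\pi(2),\dots,\pi(n))_{\rm c}\in\mathcal S_n^*$, \[ \mathbb{E}\,\#\{i\in\{1,\dots,n\}:\sigma(i)\ne\sigma^*(i)\}\le\sum_{j=1}^n j^{-1}\le1+\log(n). \]
   Context: $\mathcal S_n$ denotes the set of permutations of $\{1,\dots,n\}$. For pairwise distinct $a_1,\dots,a_m\in\{1,\dots,n\}$, $(a_1,\dots,a_m)_{\rm c}$ denotes the cycle mapping $a_1\mapsto a_2\mapsto\cdots\mapsto a_m\mapsto a_1$ and fixing all other points. $\mathcal S_n^*$ is the set of permutations consisting of a single cycle of length $n$. *)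

From mathcomp Require Import all_boot all_order all_algebra all_fingroup.
From mathcomp Require Import all_classical all_reals all_analysis.
Set Implicit Arguments. Unset Strict Implicit. Unset Printing Implicit Defensive.

(* Points 1..n are represented by 'I_n = {0,...,n-1} (point k+1 <-> k).
   one_cycle p is the cycle (p(1), p(2), ..., p(n))_c, i.e. the permutation
   mapping p k to p (k+1 mod n), written x |-> p (ordS ((p^-1)%g x)). *)
Lemma one_cycle_inj n (p : {perm 'I_n}) :
  injective (fun x : 'I_n => p (ordS ((p^-1)%g x))).
Proof.
move=> x y /perm_inj /ordS_inj /perm_inj //.
Qed.

Definition one_cycle n (p : {perm 'I_n}) : {perm 'I_n} :=
  perm (@one_cycle_inj n p).

From mathcomp Require Import all_boot all_order all_algebra all_fingroup.
From mathcomp Require Import all_classical all_reals all_analysis.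
From mathcomp Require Import zify ring.
Set Implicit Arguments. Unset Strict Implicit. Unset Printing Implicit Defensive.
Import Order.TTheory GRing.Theory Num.Theory.

(* Positions are 0-based and [record p k] says that p k is the largest of
   p 0, ..., p k.  The coupling sends p k to p (k+1) (cyclically), exactly as
   the one-cycle does, unless k+1 is a record of p, in which case it sends p k
   to p j, where j is the position of the maximum of p on 0..k.  Since the
   cyclic successor of n-1 is 0, which is always a record, the two
   permutations differ only at points preceding records.  Swapping j and k
   shows that each j <= k is equally likely to carry the maximum on 0..k, so k
   is a record for n!/(k+1) permutations, and the expected number of records
   is the harmonic number.  The coupling is injective by downward induction:
   if p is known above k, then so are the maximum value of p on 0..k and
   whether k+1 is a record, hence the image of p k under the coupling, which
   determines p k. *)

Lemma eq_from_top n (T : Type) (f g : 'I_n -> T) :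
  (forall k : 'I_n, (forall j : 'I_n, k < j -> f j = g j) -> f k = g k) -> f =1 g.
Proof.
move=> step k; have [m] := ubnP (n - k); elim: m k => // m IH k lt_nk.
by apply: step => j lt_kj; apply: IH; have := ltn_ord j; lia.
Qed.

Lemma sum_card_exchange (I J : finType) (r : I -> J -> bool) :
  \sum_i #|[set j | r i j]| = \sum_j #|[set i | r i j]|.
Proof.
under eq_bigr do rewrite -sum1dep_card.
by rewrite (exchange_big_dep xpredT) //; under eq_bigr do rewrite sum1dep_card.
Qed.

Lemma card_ord_le n (k : 'I_n) : #|[set j : 'I_n | j <= k]| = k.+1.
Proof.
rewrite -sum1dep_card (big_ord_narrow_cond (P := xpredT) (ltn_ord k)).
by rewrite sum1_card card_ord.
Qed.

Section PrefixMaxima.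
Variable n : nat.
Implicit Types (p q : {perm 'I_n}) (i j k m : 'I_n).

Definition prefix_argmax p k : 'I_n := [arg max_(j > k | j <= k) p j].

Definition record p k := prefix_argmax p k == k.

Lemma prefix_argmax_le p k : prefix_argmax p k <= k.
Proof. by rewrite /prefix_argmax; case: arg_maxnP. Qed.

Lemma le_prefix_argmax p k i : i <= k -> p i <= p (prefix_argmax p k).
Proof. by rewrite /prefix_argmax; case: arg_maxnP => // j _ max_j /max_j. Qed.

Lemma prefix_argmax_eq p k j :
  j <= k -> (forall i, i <= k -> p i <= p j) -> prefix_argmax p k = j.
Proof.
move=> le_jk max_j; apply/(@perm_inj _ p)/val_inj/eqP.
by rewrite /= eqn_leq max_j ?prefix_argmax_le // le_prefix_argmax.
Qed.

Lemma record_prefix_argmax p k : record p (prefix_argmax p k).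
Proof.
apply/eqP/prefix_argmax_eq => // i le_i_am.
exact/le_prefix_argmax/(leq_trans le_i_am)/prefix_argmax_le.
Qed.

Lemma record_ord0 p k : k = 0 :> nat -> record p k.
Proof.
move=> k0; have := prefix_argmax_le p k; rewrite k0 leqn0 => /eqP am0.
by apply/eqP/val_inj; rewrite /= am0 k0.
Qed.

Lemma recordE p m : record p m = (p (prefix_argmax p m) <= p m).
Proof.
apply/eqP/idP => [-> // | le_am_m].
by apply: prefix_argmax_eq => // i /(le_prefix_argmax p) /leq_trans; apply.
Qed.

Lemma prefix_argmax_tperm p j k : j <= k ->
  prefix_argmax (tperm j k * p)%g k = tperm j k (prefix_argmax p k).
Proof.
move=> le_jk; have le_tperm i : i <= k -> tperm j k i <= k.
  by case: tpermP => // ->.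
apply: prefix_argmax_eq => [|i le_ik]; first exact/le_tperm/prefix_argmax_le.
by rewrite !permM tpermK; apply/le_prefix_argmax/le_tperm.
Qed.

Lemma card_prefix_argmax k j : j <= k ->
  #|[set p | prefix_argmax p k == j]| = #|[set p | record p k]|.
Proof.
move=> le_jk; rewrite -(card_imset _ (mulgI (tperm j k))).
apply: eq_card => q; rewrite inE.
apply/imsetP/idP => [[p] | rec_q].
  by rewrite inE => /eqP am_p ->; rewrite /record prefix_argmax_tperm // am_p tpermL.
exists (tperm j k * q)%g; last by rewrite mulgA tperm2 mul1g.
by rewrite inE prefix_argmax_tperm // (eqP rec_q) tpermR.
Qed.

Lemma card_record_mul k : k.+1 * #|[set p | record p k]| = n`!.
Proof.
have -> : n`! = \sum_(p : {perm 'I_n}) 1 by rewrite sum1_card card_Sn.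
rewrite (partition_big (fun p => prefix_argmax p k) (fun j => j <= k)) /=; last first.
  by move=> p _; exact: prefix_argmax_le.
rewrite (eq_bigr (fun=> #|[set p | record p k]|)) => [|j le_jk]; last first.
  by rewrite sum1dep_card card_prefix_argmax.
by rewrite sum_nat_cond_const card_ord_le.
Qed.

Lemma val_ordS k : ordS k = (if k.+1 < n then k.+1 else 0) :> nat.
Proof.
rewrite /=; case: ltnP => [/modn_small // | le_nSk].
have -> : k.+1 = n by apply/eqP; rewrite eqn_leq ltn_ord.
exact: modnn.
Qed.

Definition succ_pos p k := if record p (ordS k) then prefix_argmax p k else ordS k.

Lemma succ_pos_inj p : injective (succ_pos p).
Proof.
have neq_am k1 k2 : k1 < k2 -> record p (ordS k1) ->
    prefix_argmax p k1 != prefix_argmax p k2.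
  move=> lt_k12; have := val_ordS k1; rewrite ifT; last by have := ltn_ord k2; lia.
  move=> Sk1E /eqP amSk1; apply/eqP => eq_am.
  have le_am_Sk1 : p (prefix_argmax p k1) <= p (ordS k1).
    by rewrite -amSk1; apply: le_prefix_argmax; rewrite Sk1E; exact/leqW/prefix_argmax_le.
  have le_Sk1_am : p (ordS k1) <= p (prefix_argmax p k1).
    by rewrite eq_am; apply: le_prefix_argmax; rewrite Sk1E.
  have /(@perm_inj _ p) am_Sk1 : p (prefix_argmax p k1) = p (ordS k1).
    by apply/val_inj/eqP; rewrite /= eqn_leq le_am_Sk1.
  by have := prefix_argmax_le p k1; rewrite am_Sk1 Sk1E ltnn.
move=> k1 k2; rewrite /succ_pos.
case rec1: (record p (ordS k1)); case rec2: (record p (ordS k2)).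
- case: (ltngtP k1 k2) => [lt_k12|lt_k21|/val_inj //] eq_am.
    by have := neq_am _ _ lt_k12 rec1; rewrite eq_am eqxx.
  by have := neq_am _ _ lt_k21 rec2; rewrite eq_am eqxx.
- by move=> eq_am; move: rec2; rewrite -eq_am record_prefix_argmax.
- by move=> eq_am; move: rec1; rewrite eq_am record_prefix_argmax.
- exact: ordS_inj.
Qed.

Definition coupling p : {perm 'I_n} := (p^-1 * perm (@succ_pos_inj p) * p)%g.

Lemma couplingE p k : coupling p (p k) = p (succ_pos p k).
Proof. by rewrite !permM permK permE. Qed.

Lemma one_cycleE p k : one_cycle p (p k) = p (ordS k).
Proof. by rewrite permE permK. Qed.

Lemma card_coupling_neq_one_cycle p :
  #|[set i | coupling p i != one_cycle p i]| <= #|[set k | record p k]|.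
Proof.
apply: leq_trans (leq_imset_card (fun k => p (ord_pred k)) _).
apply/subset_leq_card/fintype.subsetP => i; rewrite inE -[i](permKV p).
rewrite couplingE one_cycleE /succ_pos; case: ifP => [rec _ | _]; last by rewrite eqxx.
by apply/imsetP; exists (ordS ((p^-1)%g i)); rewrite ?inE ?ordSK.
Qed.

Lemma le_prefix_argmax_agree p q k m : (forall j, k < j -> p j = q j) -> k <= m ->
  p (prefix_argmax p m) <= q (prefix_argmax q m).
Proof.
move=> agree le_km; set i := (q^-1)%g (p (prefix_argmax p m)).
rewrite -[p _](permKV q) -/i; apply: le_prefix_argmax; rewrite leqNgt.
apply/negP => lt_mi; have : p i = q i by apply: agree; lia.
rewrite permKV => /perm_inj eq_i.
by move: lt_mi; rewrite eq_i ltnNge prefix_argmax_le.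
Qed.

Lemma prefix_argmax_agree p q k m : (forall j, k < j -> p j = q j) -> k <= m ->
  p (prefix_argmax p m) = q (prefix_argmax q m).
Proof.
move=> agree le_km; apply/val_inj/eqP; rewrite /= eqn_leq.
by rewrite !(le_prefix_argmax_agree _ le_km) // => j /agree.
Qed.

Lemma succ_pos_agree p q k : (forall j, k < j -> p j = q j) ->
  p (succ_pos p k) = q (succ_pos q k).
Proof.
move=> agree; have am_k := prefix_argmax_agree agree (leqnn k).
rewrite /succ_pos; have := val_ordS k; case: ltnP => [lt_Sk_n | _] SkE; last first.
  by rewrite !record_ord0.
have lt_k_Sk : k < ordS k by rewrite SkE.
rewrite !recordE (agree _ lt_k_Sk) (prefix_argmax_agree agree (ltnW lt_k_Sk)).
by case: ifP => _; [exact: am_k | exact: agree].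
Qed.

Lemma coupling_agree p q k : (forall j, k < j -> p j = q j) ->
  coupling p = coupling q -> p k = q k.
Proof.
move=> agree eq_c; apply: (@perm_inj _ (coupling p)).
by rewrite {2}eq_c !couplingE; exact: succ_pos_agree.
Qed.

Lemma coupling_inj : injective coupling.
Proof.
move=> p q eq_c; apply/permP/eq_from_top => k agree.
exact: coupling_agree.
Qed.

End PrefixMaxima.

Local Open Scope ring_scope.

Lemma sum_card_record (R : numFieldType) n :
  \sum_(p : {perm 'I_n}) (#|[set k | record p k]|)%:R
  = (\sum_(k < n) (k.+1%:R)^-1) * n`!%:R :> R.
Proof.
rewrite -natr_sum sum_card_exchange natr_sum mulr_suml; apply: eq_bigr => k _.
by rewrite -(card_record_mul k) natrM mulKf ?pnatr_eq0.
Qed.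

Lemma inv_le_ln_succ (R : realType) m : (0 < m)%N ->
  (m.+1%:R : R)^-1 <= ln m.+1%:R - ln m%:R.
Proof.
move=> m_gt0; have Sm_gt0 : (0 : R) < m.+1%:R by rewrite ltr0n.
have m_pos : (0 : R) < m%:R by rewrite ltr0n.
have := @le_ln1Dx R (- m.+1%:R^-1).
have -> : 1 - (m.+1%:R : R)^-1 = m%:R / m.+1%:R.
  by rewrite -[m.+1]addn1 natrD; field; rewrite natr1 pnatr_eq0.
rewrite ln_div ?posrE // ltrNl opprK invf_lt1 ?ltr1n //.
by move=> /(_ m_gt0) le_ln; rewrite -lerN2 opprB.
Qed.

Lemma harmonic_le_ln (R : realType) n : (1 <= n)%N ->
  \sum_(1 <= j < n.+1) (j%:R : R)^-1 <= 1 + ln n%:R.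
Proof.
elim: n => [// | [_ _ | m IH _]]; first by rewrite big_nat1 ln1 invr1 addr0.
rewrite big_nat_recr //=.
apply: le_trans (lerD (IH isT) (inv_le_ln_succ R (ltn0Sn m))) _.
by rewrite addrCA addrK addrC.
Qed.

Theorem mainTheorem6 (R : realType) (n : nat) (hn : (1 <= n)%N) :
  exists f : {perm 'I_n} -> {perm 'I_n},
    bijective f /\
    (\sum_(p : {perm 'I_n}) (#|[set i | f p i != one_cycle p i]|)%:R)
        / (#|{perm 'I_n}|)%:R
      <= \sum_(1 <= j < n.+1) (j%:R : R)^-1 /\
    \sum_(1 <= j < n.+1) (j%:R : R)^-1 <= 1 + ln (n%:R : R).
Proof.
exists (@coupling n); split; first exact/injF_bij/coupling_inj.
split; last exact: harmonic_le_ln.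
rewrite card_Sn ler_pdivrMr ?ltr0n ?fact_gt0 // big_add1 big_mkord -sum_card_record.
by apply: ler_sum => p _; rewrite ler_nat card_coupling_neq_one_cycle.
Qed.
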